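(* Let $\mathcal{Z}\subset\mathbb{R}^n$ be closed and convex, and let $f:\mathcal{Z}\to\mathbb{R}^n$ be such that $-f$ is $\beta$-strongly monotone and globally $L$-Lipschitz. Consider, for $K>0$, the anti-windup approximation $$\dot z=F_K(z):=f(P_\mathcal{Z}(z))-\tfrac1K\big(z-P_\mathcal{Z}(z)\big),\qquad z\in\mathbb{R}^n.$$ Then for all $0<K<4\beta/L^2$, every trajectory of this system converges to an equilibrium point $z^\star$, which is unique, and $P_\mathcal{Z}(z^\star)$ is the unique equilibrium of the projected dynamical system $\dot z=\Pi_\mathcal{Z}[f](z)$, $z\in\mathcal{Z}$.
   Context: $P_\mathcal{Z}$ is the Euclidean projection onto $\mathcal{Z}$. A map $F$ is $\beta$-strongly monotone on $\mathcal{C}$ if $\langle v-v',x-x'\rangle\ge\beta\|x-x'\|^2$ for all $x,x'\in\mathcal{C}$, $v\in F(x)$, $v'\in F(x')$. $T_x\mathcal{Z}$ is the tangent cone of $\mathcal{Z}$ at $x$, and $\Pi_\mathcal{Z}[f](x):=\arg\min_{v\in T_x\mathcal{Z}}\|v-f(x)\|$ for $x\in\mathcal{Z}$. An equilibrium of the projected system is a point $\bar z\in\mathcal{Z}$ such that the constant trajectory at $\bar z$ is a (Carathéodory) solution, i.e., $\Pi_\mathcal{Z}[f](\bar z)=0$. *)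

From HB Require Import structures.
From mathcomp Require Import all_boot all_order all_algebra.
From mathcomp Require Import all_classical all_reals all_analysis.
Set Implicit Arguments. Unset Strict Implicit. Unset Printing Implicit Defensive.
Import Order.TTheory GRing.Theory Num.Theory.
Import numFieldNormedType.Exports.
Local Open Scope classical_set_scope.
Local Open Scope ring_scope.

Section Defs.
Variables (R : realType) (n : nat).
Local Notation V := 'rV[R]_n.

(* Euclidean inner product and norm on R^n (the library norm on matrices
   is the max norm, so we define the Euclidean one explicitly). *)
Definition edot (u v : V) : R := \sum_(i < n) u ord0 i * v ord0 i.
Definition enorm (u : V) : R := Num.sqrt (edot u u).

Definition econvex (Z : set V) : Prop :=
  forall x y (t : R), Z x -> Z y -> 0 <= t <= 1 -> Z (t *: x + (1 - t) *: y).

(* Euclidean projection onto Z: a point of Z minimizing the Euclidean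
   distance to z (unique when Z is nonempty, closed and convex). *)
Definition eproj (Z : set V) (z : V) : V :=
  xget 0 [set p | Z p /\ forall y, Z y -> enorm (z - p) <= enorm (z - y)].

Definition strongly_monotone_on (C : set V) (F : V -> V) (beta : R) : Prop :=
  forall x x', C x -> C x' -> edot (F x - F x') (x - x') >= beta * enorm (x - x') ^+ 2.

Definition euclid_lipschitz_on (C : set V) (F : V -> V) (L : R) : Prop :=
  forall x x', C x -> C x' -> enorm (F x - F x') <= L * enorm (x - x').

Definition FK (Z : set V) (f : V -> V) (K : R) (z : V) : V :=
  f (eproj Z z) - K^-1 *: (z - eproj Z z).

Definition tangent_cone (Z : set V) (x : V) : set V :=
  closure [set v | exists t : R, exists2 y, Z y & 0 <= t /\ v = t *: (y - x)].

(* Pi_Z[f](x) as the set of minimizers (argmin) over the tangent cone *)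
Definition proj_field_argmin (Z : set V) (f : V -> V) (x : V) : set V :=
  [set v | tangent_cone Z x v /\
           forall w, tangent_cone Z x w -> enorm (v - f x) <= enorm (w - f x)].

Definition proj_equilibrium (Z : set V) (f : V -> V) (zb : V) : Prop :=
  Z zb /\ proj_field_argmin Z f zb = [set 0].

Definition is_trajectory (F : V -> V) (z : R -> V) : Prop :=
  {within `[0, +oo[, continuous z} /\
  forall t : R, 0 < t -> is_derive t 1 z (F (z t)).

End Defs.

From HB Require Import structures.
From mathcomp Require Import all_boot all_order all_algebra.
From mathcomp Require Import all_classical all_reals all_analysis.
From mathcomp Require Import ring lra.
Import Order.TTheory GRing.Theory Num.Theory.
Import numFieldNormedType.Exports.
Local Open Scope classical_set_scope.
Local Open Scope ring_scope.

(* The anti-windup field F_K is itself strongly monotone: -F_K is c-strongly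
   monotone on all of R^n for some c > 0, and F_K is Lipschitz.  Indeed, split
   z - w = (P z - P w) + ((z - P z) - (w - P w)); the two parts have nonnegative
   inner product (firm nonexpansiveness of P), f contributes -beta |P z - P w|^2,
   the windup term contributes -|(z - P z) - (w - P w)|^2 / K, and Young's
   inequality absorbs the cross term precisely when K < 4 beta / L^2.  Hence a
   small explicit Euler step of F_K is a Euclidean contraction; its fixed point is
   the unique zero zs, and |z(t) - zs|^2 decays along trajectories.  At a zero,
   f (P zs) = (zs - P zs) / K, so by the variational characterisation of P the
   point P zs solves the variational inequality <f x, y - x> <= 0 on Z.  Such
   solutions are exactly the equilibria of the projected system, since the
   tangent cone is the polar of the normal cone, and strong monotonicity of -f
   makes them unique. *)

Section Euclidean.
Context {R : realType} {n : nat}.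
Local Notation V := 'rV[R]_n.
Implicit Types (u v w x y : V) (a e : R).

Lemma edotC u v : edot u v = edot v u.
Proof. by apply: eq_bigr => i _; rewrite mulrC. Qed.

Lemma edotDl u v w : edot (u + v) w = edot u w + edot v w.
Proof. by rewrite /edot -big_split; apply: eq_bigr => i _; rewrite !mxE mulrDl. Qed.

Lemma edotDr u v w : edot w (u + v) = edot w u + edot w v.
Proof. by rewrite edotC edotDl ![edot _ w]edotC. Qed.

Lemma edotZl a u v : edot (a *: u) v = a * edot u v.
Proof. by rewrite /edot mulr_sumr; apply: eq_bigr => i _; rewrite !mxE mulrA. Qed.

Lemma edotZr a u v : edot u (a *: v) = a * edot u v.
Proof. by rewrite edotC edotZl edotC. Qed.

Lemma edotNl u v : edot (- u) v = - edot u v.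
Proof. by rewrite -scaleN1r edotZl mulN1r. Qed.

Lemma edotNr u v : edot u (- v) = - edot u v.
Proof. by rewrite edotC edotNl edotC. Qed.

Lemma edotBl u v w : edot (u - v) w = edot u w - edot v w.
Proof. by rewrite edotDl edotNl. Qed.

Lemma edotBr u v w : edot w (u - v) = edot w u - edot w v.
Proof. by rewrite edotDr edotNr. Qed.

Lemma edot0l u : edot 0 u = 0.
Proof. by rewrite /edot big1 // => i _; rewrite mxE mul0r. Qed.

Lemma edot0r u : edot u 0 = 0.
Proof. by rewrite edotC edot0l. Qed.

Definition edotE := (edotDl, edotDr, edotBl, edotBr, edotNl, edotNr, edotZl, edotZr).

Lemma edot_ge0 u : 0 <= edot u u.
Proof. by apply: sumr_ge0 => i _; rewrite -expr2 sqr_ge0. Qed.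

Lemma edot_eq0 u : (edot u u == 0) = (u == 0).
Proof.
apply/eqP/eqP => [uu0|->]; last exact: edot0l.
apply/rowP => i; rewrite mxE; apply/eqP; rewrite -sqrf_eq0 expr2.
by rewrite (psumr_eq0P _ uu0) // => j _; rewrite -expr2 sqr_ge0.
Qed.

Lemma edot_gt0 u : (0 < edot u u) = (u != 0).
Proof. by rewrite lt_def edot_eq0 edot_ge0 andbT. Qed.

Lemma edot_le0 u : (edot u u <= 0) = (u == 0).
Proof. by rewrite le_eqVlt ltNge edot_ge0 orbF edot_eq0. Qed.

Lemma edot_young u v a : 0 < a -> edot u v <= a / 2 * edot u u + (2 * a)^-1 * edot v v.
Proof.
move=> a0; have := edot_ge0 (a *: u - v); rewrite !edotE (edotC v u) => h.
rewrite -(ler_pM2l (_ : 0 < 2 * a)) ?mulr_gt0 //.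
have -> : 2 * a * (a / 2 * edot u u + (2 * a)^-1 * edot v v) =
    a * a * edot u u + edot v v by field; rewrite gt_eqF.
lra.
Qed.

Lemma sqr_enorm u : enorm u ^+ 2 = edot u u.
Proof. exact/sqr_sqrtr/edot_ge0. Qed.

Lemma enorm_ge0 u : 0 <= enorm u.
Proof. exact: sqrtr_ge0. Qed.

Lemma enorm_le u e : 0 <= e -> (enorm u <= e) = (edot u u <= e ^+ 2).
Proof. by move=> e0; rewrite -sqr_enorm ler_sqr // nnegrE enorm_ge0. Qed.

Lemma enorm_leE u v : (enorm u <= enorm v) = (edot u u <= edot v v).
Proof. by rewrite enorm_le ?enorm_ge0 // sqr_enorm. Qed.

Lemma edistC x y : enorm (x - y) = enorm (y - x).
Proof. by rewrite /enorm -opprB edotNl edotNr opprK. Qed.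

Lemma enormZ a u : enorm (a *: u) = `|a| * enorm u.
Proof. by rewrite /enorm edotZl edotZr mulrA -expr2 sqrtrM ?sqr_ge0 // sqrtr_sqr. Qed.

Lemma edot_le_enorm u v : edot u v <= enorm u * enorm v.
Proof.
have [uv0|uv0] := leP (edot u v) 0; first by rewrite (le_trans uv0) ?mulr_ge0 ?enorm_ge0.
rewrite -ler_sqr ?nnegrE ?mulr_ge0 ?enorm_ge0 ?(ltW uv0) // exprMn !sqr_enorm.
have [v0|v0] := eqVneq v 0.
  by move: uv0; rewrite v0 edot0r ltxx.
have vv0 : 0 < edot v v by rewrite edot_gt0.
have := edot_ge0 (edot v v *: u - edot u v *: v); rewrite !edotE (edotC v u) => h.
suff : edot v v * edot u v ^+ 2 <= edot v v * (edot u u * edot v v) by rewrite (ler_pM2l vv0).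
by move: h; rewrite !expr2; nra.
Qed.

Lemma ler_enormD u v : enorm (u + v) <= enorm u + enorm v.
Proof.
rewrite enorm_le ?addr_ge0 ?enorm_ge0 // !edotE (edotC v u) sqrrD !sqr_enorm.
have := edot_le_enorm u v; lra.
Qed.

Lemma ler_edistD x y w : enorm (y - x) <= enorm (y - w) + enorm (w - x).
Proof. by have := ler_enormD (y - w) (w - x); rewrite addrA subrK. Qed.

Lemma enorm_le_addr u v : 0 <= edot u v -> enorm u <= enorm (u + v).
Proof. by move=> uv0; rewrite enorm_leE !edotE (edotC v u); have := edot_ge0 v; lra. Qed.

Lemma coord_le_enorm u i : `|u ord0 i| <= enorm u.
Proof.
rewrite -ler_sqr ?nnegrE ?enorm_ge0 // real_normK ?num_real // sqr_enorm.
rewrite /edot (bigD1 i) //= -expr2 lerDl.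
by apply: sumr_ge0 => j _; rewrite -expr2 sqr_ge0.
Qed.

Lemma enorm_lt_ball x y e : enorm (x - y) < e -> ball x e y.
Proof.
move=> xye; split; first exact: le_lt_trans (enorm_ge0 _) xye.
move=> i j; rewrite (ord1 i) /ball /=.
by apply: le_lt_trans xye; have := coord_le_enorm (x - y) j; rewrite !mxE.
Qed.

Lemma ball_enorm_le x y e : ball x e y -> enorm (x - y) <= Num.sqrt n%:R * e.
Proof.
move=> [e0 xye]; rewrite enorm_le ?mulr_ge0 ?sqrtr_ge0 ?(ltW e0) // exprMn sqr_sqrtr ?ler0n //.
apply: le_trans (_ : \sum_(i < n) e ^+ 2 <= _); last by rewrite sumr_const card_ord mulr_natl.
apply: ler_sum => i _; rewrite -expr2 -real_normK ?num_real // ler_sqr ?nnegrE ?(ltW e0) //.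
by have := xye ord0 i; rewrite /ball /= !mxE => /ltW.
Qed.

Lemma cvg_enormP {T} (F : set_system T) {FF : Filter F} (u : T -> V) (p : V) :
  u @ F --> p <-> forall e, 0 < e -> \forall t \near F, enorm (u t - p) <= e.
Proof.
split => [/cvg_ballP up e e0 | up]; last first.
  apply/cvg_ballP => e e0; have e2 : 0 < e / 2 by lra.
  apply: filterS (up _ e2) => t ute.
  by apply: enorm_lt_ball; rewrite edistC; apply: le_lt_trans ute _; lra.
have s0 : 0 < Num.sqrt n%:R + 1 :> R by rewrite ltr_wpDl ?sqrtr_ge0.
apply: filterS (up (e / (Num.sqrt n%:R + 1)) (divr_gt0 e0 s0)) => t /ball_enorm_le.
rewrite edistC => /le_trans; apply.
by rewrite mulrA ler_pdivrMr //; have := sqrtr_ge0 (n%:R : R); nra.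
Qed.

Lemma enorm_cauchy_cvgn (u : nat -> V) :
  (forall e, 0 < e -> exists N, forall k m, (N <= k)%N -> (N <= m)%N ->
     enorm (u k - u m) <= e) ->
  cvgn u.
Proof.
move=> ucauchy; apply: cauchy_cvg; apply: cauchy_exP => e e0.
have [N uN] := ucauchy (e / 2) ltac:(lra).
exists (u N); exists N => // k Nk; apply: enorm_lt_ball.
by apply: le_lt_trans (uN N k (leqnn N) Nk) _; lra.
Qed.

Lemma edot_le0_of_min w v :
  (forall t, 0 < t <= 1 -> edot w w <= edot (w - t *: v) (w - t *: v)) -> edot w v <= 0.
Proof.
move=> wmin; rewrite leNgt; apply/negP => wv0.
have vv0 : 0 < edot v v.
  by rewrite edot_gt0; apply: contraTneq wv0 => ->; rewrite edot0r ltxx.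
pose t := Num.min 1 (edot w v / edot v v).
have t0 : 0 < t by rewrite lt_min ltr01 divr_gt0.
have t1 : t <= 1 by rewrite ge_min lexx.
have tvv : t * edot v v <= edot w v by rewrite -ler_pdivlMr // ge_min lexx orbT.
have := wmin t; rewrite t0 t1 => /(_ isT); rewrite !edotE (edotC v w) => tmin.
have : 0 <= t * (t * edot v v - 2 * edot w v) by nra.
by rewrite pmulr_rge0 //; lra.
Qed.

End Euclidean.

Section Projection.
Context {R : realType} {n : nat}.
Local Notation V := 'rV[R]_n.
Context {Z : set V}.
Hypotheses (Z0 : Z !=set0) (Zcl : closed Z) (Zcvx : econvex Z).

Lemma sqr_edist_le_min_excess {z : V} {d a b} :
  (forall y, Z y -> d <= enorm (z - y)) -> 0 <= d -> Z a -> Z b ->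
  edot (a - b) (a - b) <=
    2 * (edot (z - a) (z - a) - d ^+ 2) + 2 * (edot (z - b) (z - b) - d ^+ 2).
Proof.
move=> dmin d0 Za Zb.
have half : 0 <= (2^-1 : R) <= 1 by apply/andP; split; lra.
have := dmin _ (Zcvx _ _ _ Za Zb half).
rewrite -ler_sqr ?nnegrE ?enorm_ge0 // sqr_enorm.
have -> : z - (2^-1 *: a + (1 - 2^-1) *: b) = 2^-1 *: ((z - a) + (z - b)).
  by apply/rowP => i; rewrite !mxE; field.
have -> : a - b = (z - b) - (z - a) by apply/rowP => i; rewrite !mxE; ring.
by move: (z - a) (z - b) => p q; rewrite !edotE (edotC q p); lra.
Qed.

Lemma minimizing_seq_limit {z : V} {d} {y : nat -> V} :
  (forall w, Z w -> d <= enorm (z - w)) -> 0 <= d ->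
  (forall k, Z (y k) /\ enorm (z - y k) <= d + k.+1%:R^-1) ->
  exists p, Z p /\ enorm (z - p) <= d.
Proof.
(* Naming 1/(k+1) once keeps its occurrences syntactically equal for [lra]. *)
move=> dmin d0; pose eps k : R := k.+1%:R^-1.
move=> ynear; have {}ynear k : Z (y k) /\ enorm (z - y k) <= d + eps k := ynear k.
have [p yp] : exists p : V, y @ \oo --> p.
  apply/cvg_ex/enorm_cauchy_cvgn => e e0.
  have [eta eta0 eta_e] : exists2 eta, 0 < eta & 4 * ((2 * d + 1) * eta) = e ^+ 2.
    by exists (e ^+ 2 / (8 * d + 4)); [rewrite divr_gt0 ?exprn_gt0 //; lra | field; lra].
  have [N _ yN] := near_infty_natSinv_lt (PosNum eta0).
  have gap k : (N <= k)%N -> edot (z - y k) (z - y k) - d ^+ 2 <= (2 * d + 1) * eta.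
    move=> Nk; have ak : eps k < eta := yN k Nk.
    have ak1 : eps k <= 1 by rewrite invf_le1 ?ler1n ?ltr0Sn.
    have ak0 : 0 <= eps k by rewrite invr_ge0 ler0n.
    have yk2 : enorm (z - y k) ^+ 2 <= (d + eps k) ^+ 2.
      by rewrite ler_sqr ?nnegrE ?enorm_ge0 ?addr_ge0 ?(ynear k).2.
    have a2 : eps k * eps k <= eps k := ler_piMl ak0 ak1.
    have aeta : (2 * d + 1) * eps k <= (2 * d + 1) * eta.
      by rewrite ler_wpM2l ?(ltW ak) //; lra.
    by rewrite -sqr_enorm; lra.
  exists N => k m Nk Nm; rewrite enorm_le ?(ltW e0) //.
  apply: le_trans (sqr_edist_le_min_excess dmin d0 (ynear k).1 (ynear m).1) _.
  by have := gap k Nk; have := gap m Nm; lra.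
exists p; split.
  by apply: closed_cvg yp => //; apply: nearW => k; exact: (ynear k).1.
apply/ler_addgt0Pr => e e0; have e2 : 0 < e / 2 by lra.
have [N1 _ yN1] := near_infty_natSinv_lt (PosNum e2).
have /cvg_enormP /(_ _ e2) [N2 _ yN2] := yp.
move: (maxn N1 N2) (leq_maxl N1 N2) (leq_maxr N1 N2) => k kN1 kN2.
have k1 : eps k < e / 2 := yN1 k kN1.
have k2 : enorm (y k - p) <= e / 2 := yN2 k kN2.
by have := ler_edistD p z (y k); have := (ynear k).2; lra.
Qed.

Lemma eproj_min_exists (z : V) :
  exists p, Z p /\ forall y, Z y -> enorm (z - p) <= enorm (z - y).
Proof.
have [y0 Zy0] := Z0.
pose S := [set enorm (z - y) | y in Z].
have S_inf : has_inf S.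
  by split; [exists (enorm (z - y0)), y0 | exists 0 => _ [y _ <-]; exact: enorm_ge0].
have dmin y : Z y -> inf S <= enorm (z - y) by move=> Zy; apply: (ge_inf S_inf.2); exists y.
have d0 : 0 <= inf S by apply: (lb_le_inf S_inf.1) => _ [y _ <-]; exact: enorm_ge0.
have yk_ex k : exists yk, Z yk /\ enorm (z - yk) <= inf S + k.+1%:R^-1.
  have k0 : 0 < k.+1%:R^-1 :> R by rewrite invr_gt0.
  by have [_ [yk Zyk <-] /ltW ltyk] := inf_adherent k0 S_inf; exists yk.
have [y ynear] := choice yk_ex.
have [p [Zp pmin]] := minimizing_seq_limit dmin d0 ynear.
by exists p; split => // w /dmin; apply: le_trans.
Qed.

Lemma eproj_min z :
  Z (eproj Z z) /\ forall y, Z y -> enorm (z - eproj Z z) <= enorm (z - y).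
Proof. exact: (xgetPex 0 (eproj_min_exists z)). Qed.

Lemma eproj_in z : Z (eproj Z z).
Proof. exact: (eproj_min z).1. Qed.

Lemma eproj_vi z {y} : Z y -> edot (z - eproj Z z) (y - eproj Z z) <= 0.
Proof.
move=> Zy; have [Zp pmin] := eproj_min z.
apply: edot_le0_of_min => t /andP[t0 t1].
have := pmin _ (Zcvx _ _ _ Zy Zp (ltac:(by rewrite (ltW t0) t1) : 0 <= t <= 1)).
have -> : z - (t *: y + (1 - t) *: eproj Z z) = z - eproj Z z - t *: (y - eproj Z z).
  by apply/rowP => i; rewrite !mxE; ring.
by rewrite enorm_leE.
Qed.

Lemma eproj_firm x x' :
  0 <= edot (eproj Z x - eproj Z x') ((x - eproj Z x) - (x' - eproj Z x')).
Proof.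
move: (eproj_vi x (eproj_in x')) (eproj_vi x' (eproj_in x)).
move: (eproj Z x) (eproj Z x') => p p'.
by rewrite !edotE (edotC p x) (edotC p x') (edotC p' x) (edotC p' x') (edotC p' p); lra.
Qed.

End Projection.

Section VariationalInequality.
Context {R : realType} {n : nat}.
Local Notation V := 'rV[R]_n.
Implicit Types (Z : set V) (f : V -> V).

Definition solves_vi Z f x := Z x /\ forall y, Z y -> edot (f x) (y - x) <= 0.

Lemma cone_direction_in {Z x y t} : Z y -> 0 <= t -> tangent_cone Z x (t *: (y - x)).
Proof. by move=> Zy t0; apply: subset_closure; exists t, y. Qed.

Lemma tangent_cone_edot_le0 {Z x c} : (forall y, Z y -> edot c (y - x) <= 0) ->
  forall v, tangent_cone Z x v -> edot v c <= 0.
Proof.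
move=> c_polar v Tv; apply/ler_addgt0Pr => e e0; rewrite add0r.
have [r r0 rce] : exists2 r, 0 < r & r * (Num.sqrt n%:R * enorm c) <= e.
  have s0 : 0 <= Num.sqrt n%:R * enorm c by rewrite mulr_ge0 ?sqrtr_ge0 ?enorm_ge0.
  exists (e / (Num.sqrt n%:R * enorm c + 1)); first by rewrite divr_gt0 //; lra.
  by rewrite mulrAC ler_pdivrMr ?ler_pM2l; lra.
have [_ [[t [y Zy [t0 ->]]] /ball_enorm_le vw]] := Tv _ (nbhsx_ballx v _ r0).
have w_le0 : edot (t *: (y - x)) c <= 0.
  by rewrite edotZl edotC mulr_ge0_le0 ?c_polar.
have vw_c := edot_le_enorm (v - t *: (y - x)) c.
have vw_s := ler_wpM2r (enorm_ge0 c) vw.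
by move: vw_c; rewrite edotBl; lra.
Qed.

Lemma proj_equilibrium_vi Z f x : proj_equilibrium Z f x -> solves_vi Z f x.
Proof.
move=> [Zx field0]; split => // y Zy.
have [_ zero_min] : proj_field_argmin Z f x 0 by rewrite field0.
apply: edot_le0_of_min => t /andP[t0 _].
have := zero_min _ (cone_direction_in Zy (ltW t0)).
by rewrite enorm_leE sub0r -[t *: (y - x) - f x]opprB !edotNl !edotNr !opprK.
Qed.

Lemma vi_proj_equilibrium Z f x : solves_vi Z f x -> proj_equilibrium Z f x.
Proof.
move=> [Zx fx_vi]; split => //.
have polar := tangent_cone_edot_le0 fx_vi.
have T0 : tangent_cone Z x 0 by have := cone_direction_in (x := x) Zx (lexx 0); rewrite scale0r.
apply/seteqP; split => v /=.
  move=> [Tv /(_ _ T0)]; rewrite enorm_leE sub0r edotNl edotNr opprK !edotE (edotC (f x) v).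
  by have := polar v Tv; move=> vfx vmin; apply/eqP; rewrite -edot_le0; lra.
move=> ->; split => // w Tw.
rewrite enorm_leE sub0r edotNl edotNr opprK !edotE (edotC (f x) w).
by have := polar w Tw; have := edot_ge0 w; lra.
Qed.

Lemma strongly_monotoneNP (C : set V) (F : V -> V) c :
  strongly_monotone_on C (fun x => - F x) c <->
  forall x y, C x -> C y -> edot (F x - F y) (x - y) <= - c * edot (x - y) (x - y).
Proof.
have E x y : edot (- F x - - F y) (x - y) = - edot (F x - F y) (x - y).
  by rewrite -opprD edotNl.
by split => Fsm x y Cx Cy; have := Fsm x y Cx Cy; rewrite ?E sqr_enorm; lra.
Qed.

Lemma vi_unique {Z f beta x y} : 0 < beta ->
  strongly_monotone_on Z (fun x => - f x) beta ->
  solves_vi Z f x -> solves_vi Z f y -> x = y.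
Proof.
move=> beta0 /strongly_monotoneNP fsm [Zx x_vi] [Zy y_vi].
move: (fsm _ _ Zx Zy) (x_vi _ Zy) (y_vi _ Zx).
rewrite !edotE (edotC (f x) y) (edotC (f x) x) (edotC (f y) x) (edotC (f y) y) (edotC y x).
move=> h1 h2 h3; have : beta * edot (x - y) (x - y) <= 0 by rewrite !edotE (edotC y x); lra.
by rewrite pmulr_rle0 // edot_le0 subr_eq0 => /eqP.
Qed.

End VariationalInequality.

Section Contraction.
Context {R : realType} {n : nat}.
Local Notation V := 'rV[R]_n.
Variables (T : V -> V) (q : R).
Hypotheses (q0 : 0 <= q) (q1 : q < 1).
Hypothesis Tq : forall x y, enorm (T x - T y) <= q * enorm (x - y).
Local Notation u x k := (iter k T x).

Lemma iter_contraction_step x k : enorm (u x k.+1 - u x k) <= enorm (T x - x) * q ^+ k.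
Proof.
elim: k => [|k IH]; first by rewrite expr0 mulr1.
by apply: le_trans (Tq _ _) _; rewrite exprS mulrCA ler_wpM2l.
Qed.

Lemma iter_contraction_tail x j k :
  enorm (u x (j + k) - u x k) * (1 - q) <= enorm (T x - x) * (q ^+ k - q ^+ (j + k)).
Proof.
have q1' : 0 <= 1 - q by rewrite subr_ge0 ltW.
elim: j => [|j IH]; first by rewrite add0n !subrr /enorm edot0l sqrtr0 mul0r mulr0.
rewrite addSn; apply: le_trans (ler_wpM2r q1' (ler_edistD _ _ (u x (j + k)))) _.
have := ler_wpM2r q1' (iter_contraction_step x (j + k)).
by rewrite exprS mulrDl; lra.
Qed.

Lemma iter_contraction_cvg x : exists p : V, u x k @[k --> \oo] --> p.
Proof.
apply/cvg_ex/enorm_cauchy_cvgn => e e0.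
pose D := enorm (T x - x).
have D0 : 0 <= D by exact: enorm_ge0.
have e1 : 0 < e * (1 - q) / (D + 1) by rewrite !divr_gt0 ?mulr_gt0 ?subr_gt0 //; lra.
have /cvgrPdist_lt /(_ _ e1) [N _ qN] := cvg_expr (ltac:(by rewrite ger0_norm) : `|q| < 1).
have dist_le k m : (N <= k)%N -> (k <= m)%N -> enorm (u x m - u x k) <= e.
  move=> Nk km; have := iter_contraction_tail x (m - k) k; rewrite subnK //.
  have qk : q ^+ k < e * (1 - q) / (D + 1).
    by have := qN k Nk; rewrite /= sub0r normrN ger0_norm // exprn_ge0.
  have Dqk : D * q ^+ k <= e * (1 - q).
    rewrite ltr_pdivlMr ?ltr_wpDl // in qk.
    by have := exprn_ge0 k q0; nra.
  have := exprn_ge0 m q0; rewrite -/D => qm tail.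
  by rewrite -(ler_pM2r (_ : 0 < 1 - q)) ?subr_gt0 //; nra.
exists N => k m Nk Nm; have [km|mk] := leqP k m.
  by rewrite edistC; exact: dist_le.
exact: dist_le Nm (ltnW mk).
Qed.

Lemma contraction_fixpoint : exists p, T p = p.
Proof.
have [p up] := iter_contraction_cvg 0; exists p.
suff : enorm (T p - p) <= 0 by rewrite enorm_le // expr0n /= edot_le0 subr_eq0 => /eqP.
apply/ler_addgt0Pr => e e0; rewrite add0r.
have e2 : 0 < e / 2 by lra.
have /cvg_enormP /(_ _ e2) [N _ uN] := up.
have h1 : enorm (p - u 0 N) <= e / 2 by rewrite edistC; exact: uN N (leqnn N).
have h2 : enorm (T (u 0 N) - p) <= e / 2 := uN N.+1 (leqnSn N).
have h3 : q * enorm (p - u 0 N) <= enorm (p - u 0 N) by rewrite ler_piMl ?enorm_ge0 ?ltW.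
by have := Tq p (u 0 N); have := ler_edistD p (T p) (T (u 0 N)); lra.
Qed.

End Contraction.

Section StronglyMonotoneFields.
Context {R : realType} {n : nat}.
Local Notation V := 'rV[R]_n.
Implicit Types (F : V -> V).

Lemma strongly_monotone_inj {F c} : 0 < c ->
  strongly_monotone_on setT (fun x => - F x) c -> injective F.
Proof.
move=> c0 /strongly_monotoneNP Fsm x y Fxy; have := Fsm x y I I.
by rewrite Fxy subrr edot0l mulNr oppr_ge0 pmulr_rle0 // edot_le0 subr_eq0 => /eqP.
Qed.

Lemma strongly_monotone_zero {F c M} : 0 < c -> 0 < M ->
  strongly_monotone_on setT (fun x => - F x) c -> euclid_lipschitz_on setT F M ->
  exists z, F z = 0.
Proof.
move=> c0 M0 /strongly_monotoneNP Fsm FM.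
(* With h = c / M^2 the Euler step x + h F x contracts by sqrt (1 - c^2 / M^2). *)
pose h := c / M ^+ 2.
have h0 : 0 < h by rewrite divr_gt0 ?exprn_gt0.
have hM : h * M ^+ 2 = c by rewrite /h mulfVK // expf_neq0 ?gt_eqF.
pose rho := Num.max (1 - h * c) 0.
have rho0 : 0 <= rho by rewrite le_max lexx orbT.
have rho1 : Num.sqrt rho < 1.
  by rewrite -sqrtr1 ltr_sqrt ?ltr01 // gt_max ltr01 andbT; have := mulr_gt0 h0 c0; lra.
have [p Tp] : exists p, p + h *: F p = p.
  apply: (contraction_fixpoint _ _ (sqrtr_ge0 rho) rho1) => x y /=.
  rewrite enorm_le ?mulr_ge0 ?sqrtr_ge0 ?enorm_ge0 // exprMn sqr_sqrtr //.
  have -> : x + h *: F x - (y + h *: F y) = (x - y) + h *: (F x - F y).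
    by rewrite opprD addrACA scalerBr.
  have := FM x y I I; rewrite enorm_le ?mulr_ge0 ?enorm_ge0 ?(ltW M0) // exprMn.
  have := Fsm x y I I; rewrite !sqr_enorm.
  move: (x - y) (F x - F y) => d g dg gg.
  have hg : h * (h * edot g g) <= h * c * edot d d.
    by rewrite -mulrA ler_wpM2l ?(ltW h0) // -hM -mulrA ler_wpM2l ?(ltW h0).
  have hdg : h * edot g d <= h * (- c * edot d d) by rewrite ler_wpM2l ?(ltW h0).
  have : (1 - h * c) * edot d d <= rho * edot d d by rewrite ler_wpM2r ?edot_ge0 ?le_max ?lexx.
  by rewrite !edotE (edotC d g); lra.
exists p; move/eqP: Tp; by rewrite -subr_eq0 addrC addKr scaler_eq0 gt_eqF //= => /eqP.
Qed.

End StronglyMonotoneFields.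

Section Trajectories.
Context {R : realType} {n : nat}.
Local Notation V := 'rV[R]_n.

Lemma is_derive_coord (z : R -> V) (t : R) (d : V) (i : 'I_n) :
  is_derive t 1 z d -> is_derive t 1 (fun s => z s ord0 i) (d ord0 i).
Proof.
move=> [zd <-]; apply: DeriveDef; first exact: (derivable_mxP _ _ _).1 zd ord0 i.
by rewrite derive_mx // mxE.
Qed.

Lemma is_derive_edist (z : R -> V) (zs : V) (t : R) (d : V) : is_derive t 1 z d ->
  is_derive t 1 (fun s => edot (z s - zs) (z s - zs)) (2 * edot (z t - zs) d).
Proof.
move=> zd.
have coord_d i : is_derive t 1 (fun s => (z s ord0 i - zs ord0 i) ^+ 2)
    ((2%:R * (z t ord0 i - zs ord0 i) ^+ 1) *: (d ord0 i - 0)).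
  have := is_deriveX 2 (is_deriveB (@is_derive_coord z t d i zd) (is_derive_cst (zs ord0 i) t 1)).
  by rewrite !fctE.
have -> : (fun s => edot (z s - zs) (z s - zs)) =
    \sum_(i < n) (fun s => (z s ord0 i - zs ord0 i) ^+ 2).
  by apply/funext => s; rewrite fct_sumE; apply: eq_bigr => i _; rewrite !mxE expr2.
apply: is_derive_eq (is_derive_sum coord_d) _.
rewrite /edot mulr_sumr; apply: eq_bigr => i _.
by rewrite !mxE subr0 expr1 /GRing.scale /= mulrA.
Qed.

Lemma lyapunov_cvg0 (W dW : R -> R) (c : R) : 0 < c ->
  (forall t : R, 0 < t -> is_derive t 1 W (dW t)) -> (forall t, 0 <= W t) ->
  (forall t, dW t <= - c * W t) -> W t @[t --> +oo] --> 0.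
Proof.
move=> c0 WdW W0 dW_le.
have dW_le0 t : dW t <= 0 by have := mulr_ge0 (ltW c0) (W0 t); have := dW_le t; lra.
have mvt s t : 0 < s -> s < t -> exists2 x, s < x & W t - W s = dW x * (t - s).
  move=> s0 st.
  have Wd x : x \in `]s, t[ -> is_derive x 1 W (dW x).
    by rewrite in_itv /= => /andP[sx _]; apply: WdW; apply: lt_trans sx.
  have Wc : {within `[s, t], continuous W}.
    apply: derivable_within_continuous => x; rewrite in_itv /= => /andP[sx _].
    by have [] := WdW x (lt_le_trans s0 sx).
  by have [x] := MVT st Wd Wc; rewrite in_itv /= => /andP[sx _]; exists x.
have W_anti s t : 0 < s -> s <= t -> W t <= W s.
  move=> s0; rewrite le_eqVlt => /predU1P[-> //|st].
  have [x _ Wts] := mvt s t s0 st.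
  by rewrite -subr_le0 Wts mulr_le0_ge0 ?dW_le0 ?subr_ge0 ?(ltW st).
have W_small e : 0 < e -> exists2 T, 0 < T & W T <= e.
  move=> e0; have ce0 : 0 < c * e by rewrite mulr_gt0.
  have [T T1 ceT] : exists2 T, 1 < T & c * e * (T - 1) = c * e + W 1.
    exists (2 + W 1 / (c * e)); last by field; rewrite !gt_eqF.
    by have := divr_ge0 (W0 1) (ltW ce0); lra.
  have [x x1 WT] := mvt 1 T ltr01 T1.
  have [Wx|Wx] := leP (W x) e; first by exists x => //; lra.
  have : dW x * (T - 1) <= - (c * e) * (T - 1).
    by rewrite ler_pM2r ?subr_gt0 //; have := dW_le x; nra.
  by have := W0 T; lra.
apply/cvgrPdist_le => e e0; have [T T0 WT] := W_small e e0.
exists T; split; first exact: num_real.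
move=> t Tt; rewrite sub0r normrN ger0_norm ?W0 //.
exact: le_trans (W_anti T t T0 (ltW Tt)) WT.
Qed.

Lemma strongly_monotone_trajectory_cvg {F : V -> V} {c : R} {zs : V} {z : R -> V} :
  0 < c -> F zs = 0 -> strongly_monotone_on setT (fun x => - F x) c ->
  is_trajectory F z -> z t @[t --> +oo] --> zs.
Proof.
move=> c0 Fzs /strongly_monotoneNP Fsm [_ zF].
have W0 : edot (z t - zs) (z t - zs) @[t --> +oo] --> 0.
  have c2 : 0 < 2 * c by lra.
  apply: (@lyapunov_cvg0 (fun t => edot (z t - zs) (z t - zs))
    (fun t => 2 * edot (z t - zs) (F (z t))) _ c2) => [t t0|t|t].
  - exact/is_derive_edist/zF.
  - exact: edot_ge0.
  - by have := Fsm (z t) zs I I; rewrite Fzs subr0 edotC; lra.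
apply/cvg_enormP => e e0.
have /cvgrPdist_le /(_ _ (exprn_gt0 2 e0)) := W0.
apply: filterS => t; rewrite sub0r normrN ger0_norm ?edot_ge0 // => Wt.
by rewrite enorm_le ?(ltW e0).
Qed.

End Trajectories.

Section AntiWindup.
Context {R : realType} {n : nat}.
Local Notation V := 'rV[R]_n.
Context {Z : set V} {f : V -> V} {beta L K : R}.
Hypotheses (Z0 : Z !=set0) (Zcl : closed Z) (Zcvx : econvex Z).
Hypotheses (beta0 : 0 < beta) (L0 : 0 < L) (K0 : 0 < K).
Hypothesis fsm : strongly_monotone_on Z (fun x => - f x) beta.
Hypothesis flip : euclid_lipschitz_on Z f L.
Local Notation P := (eproj Z).

Lemma FK_zero_vi {z} : FK Z f K z = 0 -> solves_vi Z f (P z).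
Proof.
move/eqP; rewrite /FK subr_eq0 => /eqP fPz; split; first exact: eproj_in.
by move=> y Zy; rewrite fPz edotZl mulr_ge0_le0 ?invr_ge0 ?(ltW K0) ?eproj_vi.
Qed.

Lemma edist_eproj_split z w : z - w = (P z - P w) + ((z - P z) - (w - P w)).
Proof. by apply/rowP => i; rewrite !mxE; ring. Qed.

Lemma FK_lipschitz : euclid_lipschitz_on setT (FK Z f K) (L + K^-1).
Proof.
move=> z w _ _; have firm := eproj_firm Z0 Zcl Zcvx z w.
have Pzw : enorm (P z - P w) <= enorm (z - w).
  by rewrite (edist_eproj_split z w); exact: enorm_le_addr.
have Rzw : enorm ((z - P z) - (w - P w)) <= enorm (z - w).
  by rewrite (edist_eproj_split z w) (addrC (P z - P w)); apply: enorm_le_addr; rewrite edotC.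
have -> : FK Z f K z - FK Z f K w =
    (f (P z) - f (P w)) + (- K^-1) *: ((z - P z) - (w - P w)).
  by apply/rowP => i; rewrite !mxE; ring.
apply: le_trans (ler_enormD _ _) _.
rewrite enormZ normrN ger0_norm ?invr_ge0 ?(ltW K0) // mulrDl lerD //.
  apply: le_trans (flip _ _ (eproj_in Z0 Zcl Zcvx z) (eproj_in Z0 Zcl Zcvx w)) _.
  by rewrite ler_wpM2l ?(ltW L0).
by rewrite ler_wpM2l ?invr_ge0 ?(ltW K0).
Qed.

Hypothesis K_lt : K < 4 * beta / L ^+ 2.

(* Weight for Young's inequality [<d, b> <= s/2 |d|^2 + |b|^2 / (2 s)]: the
   estimate below needs K/2 < s < 2 beta / L^2, an interval that is nonempty
   exactly when K < 4 beta / L^2; s is its midpoint. *)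
Let s := K / 4 + beta / L ^+ 2.
Let c1 := beta - s * L ^+ 2 / 2.
Let c2 := K^-1 - (2 * s)^-1.

Let L2_gt0 : 0 < L ^+ 2. Proof. exact: exprn_gt0. Qed.

Let s_gt0 : 0 < s. Proof. by rewrite addr_gt0 ?divr_gt0. Qed.

Let c1_gt0 : 0 < c1.
Proof.
have -> : c1 = (4 * beta - K * L ^+ 2) / 8 by rewrite /c1 /s; field; rewrite gt_eqF.
by rewrite divr_gt0 // subr_gt0 -ltr_pdivlMr.
Qed.

Let c2_gt0 : 0 < c2.
Proof.
rewrite /c2 subr_gt0 ltf_pV2 ?posrE ?mulr_gt0 //.
have -> : 2 * s = K / 2 + 2 * (beta / L ^+ 2) by rewrite /s; lra.
by move: K_lt; rewrite -mulrA; lra.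
Qed.

Lemma antiwindup_decay (a b d : V) : 0 <= edot a b ->
  edot d a <= - beta * edot a a -> edot d d <= L ^+ 2 * edot a a ->
  edot (d - K^-1 *: b) (a + b) <= - (Num.min c1 c2 / 2) * edot (a + b) (a + b).
Proof.
move=> ab da dd; set m := Num.min c1 c2.
have m0 : 0 <= m by rewrite le_min !ltW.
have db := edot_young d b s s_gt0.
have ab2 := edot_young a b 1 ltr01.
have dd' : s / 2 * edot d d <= s / 2 * (L ^+ 2 * edot a a).
  by rewrite ler_wpM2l ?divr_ge0 ?(ltW s_gt0).
have ma : m * edot a a <= c1 * edot a a by rewrite ler_wpM2r ?edot_ge0 ?ge_min ?lexx.
have mb : m * edot b b <= c2 * edot b b by rewrite ler_wpM2r ?edot_ge0 ?ge_min ?lexx ?orbT.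
have m2 : m / 2 * (edot a a + 2 * edot a b + edot b b) <= m / 2 * (2 * (edot a a + edot b b)).
  by rewrite ler_wpM2l ?divr_ge0 //; lra.
have abK : 0 <= K^-1 * edot a b by rewrite mulr_ge0 ?invr_ge0 ?(ltW K0).
rewrite /c1 /c2 in ma mb.
by rewrite !edotE (edotC b a); lra.
Qed.

Lemma FK_strongly_monotone :
  exists2 c, 0 < c & strongly_monotone_on setT (fun z => - FK Z f K z) c.
Proof.
exists (Num.min c1 c2 / 2); first by rewrite divr_gt0 // lt_min c1_gt0 c2_gt0.
apply/strongly_monotoneNP => z w _ _.
have Pz := eproj_in Z0 Zcl Zcvx z; have Pw := eproj_in Z0 Zcl Zcvx w.
have -> : FK Z f K z - FK Z f K w =
    (f (P z) - f (P w)) - K^-1 *: ((z - P z) - (w - P w)).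
  by apply/rowP => i; rewrite !mxE; ring.
rewrite (edist_eproj_split z w); apply: antiwindup_decay; first exact: eproj_firm.
  by move/strongly_monotoneNP: fsm; apply.
have := flip _ _ Pz Pw.
by rewrite enorm_le ?mulr_ge0 ?enorm_ge0 ?(ltW L0) // exprMn sqr_enorm.
Qed.

End AntiWindup.

Theorem theorem6p3 (R : realType) (n : nat) (Z : set 'rV[R]_n)
  (f : 'rV[R]_n -> 'rV[R]_n) (beta L : R) :
  Z !=set0 -> closed Z -> econvex Z ->
  0 < beta -> 0 < L ->
  strongly_monotone_on Z (fun x => - f x) beta ->
  euclid_lipschitz_on Z f L ->
  forall K : R, 0 < K -> K < 4 * beta / L ^+ 2 ->
  exists zs : 'rV[R]_n,
    [/\ FK Z f K zs = 0,
        (forall z, FK Z f K z = 0 -> z = zs),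
        (forall z : R -> 'rV[R]_n, is_trajectory (FK Z f K) z ->
           z t @[t --> +oo] --> zs),
        proj_equilibrium Z f (eproj Z zs) &
        (forall zb, proj_equilibrium Z f zb -> zb = eproj Z zs)].
Proof.
move=> Z0 Zcl Zcvx beta0 L0 fsm flip K K0 K_lt.
have [c c0 FKsm] := FK_strongly_monotone Z0 Zcl Zcvx beta0 L0 K0 fsm flip K_lt.
have FKlip := FK_lipschitz Z0 Zcl Zcvx L0 K0 flip.
have LK0 : 0 < L + K^-1 by rewrite addr_gt0 ?invr_gt0.
have [zs FKzs] := strongly_monotone_zero c0 LK0 FKsm FKlip.
have zs_vi := FK_zero_vi Z0 Zcl Zcvx K0 FKzs.
exists zs; split => //.
- by move=> z FKz; apply: (strongly_monotone_inj c0 FKsm); rewrite FKz FKzs.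
- by move=> z; exact: strongly_monotone_trajectory_cvg c0 FKzs FKsm.
- exact: vi_proj_equilibrium.
- by move=> zb /proj_equilibrium_vi zb_vi; exact: vi_unique beta0 fsm zb_vi zs_vi.
Qed.
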